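(* Impose (A1)–(A6), one of the support cases (A7.1), (A7.2), (A7.3)(a), (A7.3)(b), and (A8''). Fix $x\in\mathcal X$, $u\in[0,1]$, and let $\underline\Delta,\overline\Delta$ and $\underline\Lambda,\overline\Lambda$ be the functions defined in the context for that support case. Then $$\min\{\underline\Delta(x,u),\underline\Lambda(x,u)\}\le\Delta^{OO}_{Y^*}(x,u)\le\max\{\overline\Delta(x,u),\overline\Lambda(x,u)\}.$$
   Context: Standing setup. On a common probability space: $X$ (covariates, support $\mathcal X$), $Z$ (instrument, support $\mathcal Z$), $W=(X,Z)$; latent real random variables $U,V$, jointly continuously distributed conditional on $X$, with $U\mid X$ and $V\mid X$ each Uniform$[0,1]$ (their joint dependence unrestricted); real potential outcomes of interest $Y_0^*,Y_1^*$. Given functions $P:\mathcal X\times\mathcal Z\to[0,1]$ and $Q:\{0,1\}\times\mathcal X\to[0,1]$, define the treatment $D=\mathbf 1\{P(W)\ge U\}$, potential selection indicators $S_d=\mathbf 1\{Q(d,X)\ge V\}$ ($d\in\{0,1\}$), selection indicator $S=DS_1+(1-D)S_0$, potential observable outcomes $Y_d=S_dY_d^*$ and observable outcome $Y=DY_1+(1-D)Y_0$. For $x\in\mathcal X$, $u\in[0,1]$, $d\in\{0,1\}$: $m_d^Y(x,u)=\mathbb E[Y_d\mid X=x,U=u]$, $m_d^S(x,u)=\mathbb E[S_d\mid X=x,U=u]$, $\Delta_S(x,u)=m_1^S(x,u)-m_0^S(x,u)$, and $\Delta^{OO}_{Y^*}(x,u)=\mathbb E[Y_1^*-Y_0^*\mid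 X=x,U=u,S_0=1,S_1=1]$. Ratios appearing are assumed well defined. Assumptions: (A1) $Z$ is independent of $(U,V,Y_0^*,Y_1^* )$ conditional on $X$; (A2) the distribution of $P(W)$ given $X$ is nondegenerate; (A3) $\mathbb E|Y_d^*|<\infty$ and $\mathbb E[(Y_d^* )^2]<\infty$; (A4) $0<\mathbb P[D=1\mid X]<1$; (A5) $X$ is invariant to counterfactual manipulation of treatment; (A6) $Y_0^*,Y_1^*$ have a common support $\mathcal Y^*\subseteq\mathbb R$; $\underline y^*=\inf\mathcal Y^*$, $\overline y^*=\sup\mathcal Y^*$ (possibly infinite), known. Support cases: (A7.1) $\underline y^*>-\infty$, $\overline y^*=+\infty$, $\mathcal Y^*$ an interval; (A7.2) $\underline y^*=-\infty$, $\overline y^*<\infty$, $\mathcal Y^*$ an interval; (A7.3) both finite and either (a) $\mathcal Y^*$ an interval or (b) $\underline y^*,\overline y^*\in\mathcal Y^*$. (A8'') (monotone selection, unknown direction) either $Q(1,x)>Q(0,x)>0$ for all $x\in\mathcal X$, or $Q(0,x)>Q(1,x)>0$ for all $x\in\mathcal X$. Functions (at $(x,u)$): under (A7.1), $\underline\Delta=\underline y^*-\frac{m_0^Y}{m_0^S}$, $\overline\Delta=\frac{m_1^Y-\underline y^*\Delta_S}{m_0^S}-\frac{m_0^Y}{m_0^S}$, $\underline\Lambda=\frac{m_1^Y}{m_1^S}-\frac{m_0^Y-\underline y^*(-\Delta_S)}{m_1^S}$, $\overline\Lambda=\frac{m_1^Y}{m_1^S}-\underline y^*$; under (A7.2), $\underline\Delta=\frac{m_1^Y-\overline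 y^*\Delta_S}{m_0^S}-\frac{m_0^Y}{m_0^S}$, $\overline\Delta=\overline y^*-\frac{m_0^Y}{m_0^S}$, $\underline\Lambda=\frac{m_1^Y}{m_1^S}-\overline y^*$, $\overline\Lambda=\frac{m_1^Y}{m_1^S}-\frac{m_0^Y-\overline y^*(-\Delta_S)}{m_1^S}$; under (A7.3), $\underline\Delta=\max\{\frac{m_1^Y-\overline y^*\Delta_S}{m_0^S},\underline y^*\}-\frac{m_0^Y}{m_0^S}$, $\overline\Delta=\min\{\frac{m_1^Y-\underline y^*\Delta_S}{m_0^S},\overline y^*\}-\frac{m_0^Y}{m_0^S}$, $\underline\Lambda=\frac{m_1^Y}{m_1^S}-\min\{\frac{m_0^Y-\underline y^*(-\Delta_S)}{m_1^S},\overline y^*\}$, $\overline\Lambda=\frac{m_1^Y}{m_1^S}-\max\{\frac{m_0^Y-\overline y^*(-\Delta_S)}{m_1^S},\underline y^*\}$. *)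

From HB Require Import structures.
From mathcomp Require Import all_boot all_order all_algebra.
From mathcomp Require Import all_classical all_reals all_analysis.
Set Implicit Arguments. Unset Strict Implicit. Unset Printing Implicit Defensive.
Import Order.TTheory GRing.Theory Num.Theory.
Import numFieldNormedType.Exports.
Local Open Scope classical_set_scope.
Local Open Scope ring_scope.

Section Defs.
Context (R : realType) (d : measure_display) (Omega : measurableType d)
        (P : probability Omega R).

Definition cond_prob_version {dX} {TX : measurableType dX}
    (X : Omega -> TX) (A : set Omega) (g : TX -> R) : Prop :=
  measurable_fun setT g /\
  forall C : set TX, measurable C ->
    P (A `&` (X @^-1` C)) = (\int[P]_(w in X @^-1` C) (g (X w))%:E)%E.

(* Conditional independence of Z and W given X:
   P[Z in A, W in B | X] = P[Z in A | X] * P[W in B | X]  a.s.,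
   i.e. the product of any versions is a version of the joint one. *)
Definition cond_indep {dX dZ dW} {TX : measurableType dX}
    {TZ : measurableType dZ} {TW : measurableType dW}
    (X : Omega -> TX) (Z : Omega -> TZ) (W : Omega -> TW) : Prop :=
  forall (A : set TZ) (B : set TW), measurable A -> measurable B ->
  forall gA gB : TX -> R,
    cond_prob_version X (Z @^-1` A) gA ->
    cond_prob_version X (W @^-1` B) gB ->
    forall C : set TX, measurable C ->
      P ((Z @^-1` A) `&` (W @^-1` B) `&` (X @^-1` C)) =
      (\int[P]_(w in X @^-1` C) (gA (X w) * gB (X w))%:E)%E.

Definition is_condexp {dG} {TG : measurableType dG}
    (G : Omega -> TG) (f : Omega -> R) (g : TG -> R) : Prop :=
  measurable_fun setT g /\ P.-integrable setT (EFin \o (g \o G)) /\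
  forall A : set TG, measurable A ->
    (\int[P]_(w in G @^-1` A) (f w)%:E = \int[P]_(w in G @^-1` A) (g (G w))%:E)%E.

(* g is a version of E[f | G, E] (conditional expectation given sigma(G)
   under the conditional measure P(. | E)). *)
Definition is_condexp_on {dG} {TG : measurableType dG}
    (G : Omega -> TG) (E : set Omega) (f : Omega -> R) (g : TG -> R) : Prop :=
  measurable_fun setT g /\ P.-integrable E (EFin \o (g \o G)) /\
  forall A : set TG, measurable A ->
    (\int[P]_(w in G @^-1` A `&` E) (f w)%:E
     = \int[P]_(w in G @^-1` A `&` E) (g (G w))%:E)%E.

Definition rv_support (Y : Omega -> R) : set R :=
  [set y | forall e : R, 0 < e -> (0 < P (Y @^-1` ball y e))%E].

End Defs.

Inductive supp_case := A7_1 | A7_2 | A7_3.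

Definition support_case {R : realType} (c : supp_case) (Ys : set R) : Prop :=
  let ylo := ereal_inf (EFin @` Ys) in
  let yhi := ereal_sup (EFin @` Ys) in
  match c with
  | A7_1 => (-oo < ylo)%E /\ yhi = +oo%E /\ is_interval Ys
  | A7_2 => ylo = -oo%E /\ (yhi < +oo)%E /\ is_interval Ys
  | A7_3 => ylo \is a fin_num /\ yhi \is a fin_num /\
            (is_interval Ys \/ (Ys (fine ylo) /\ Ys (fine yhi)))
  end.

Section Bounds.
Context {R : realType}.
(* ylo, yhi : the (finite, where used) endpoints; m0Y m1Y m0S m1S : values of
   m_0^Y, m_1^Y, m_0^S, m_1^S at (x,u); dS = Delta_S = m1S - m0S *)
Variables (ylo yhi m0Y m1Y m0S m1S : R).
Let dS := m1S - m0S.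

Definition Delta_lo (c : supp_case) : R :=
  match c with
  | A7_1 => ylo - m0Y / m0S
  | A7_2 => (m1Y - yhi * dS) / m0S - m0Y / m0S
  | A7_3 => Num.max ((m1Y - yhi * dS) / m0S) ylo - m0Y / m0S
  end.

Definition Delta_hi (c : supp_case) : R :=
  match c with
  | A7_1 => (m1Y - ylo * dS) / m0S - m0Y / m0S
  | A7_2 => yhi - m0Y / m0S
  | A7_3 => Num.min ((m1Y - ylo * dS) / m0S) yhi - m0Y / m0S
  end.

Definition Lambda_lo (c : supp_case) : R :=
  match c with
  | A7_1 => m1Y / m1S - (m0Y - ylo * (- dS)) / m1S
  | A7_2 => m1Y / m1S - yhi
  | A7_3 => m1Y / m1S - Num.min ((m0Y - ylo * (- dS)) / m1S) yhi
  end.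

Definition Lambda_hi (c : supp_case) : R :=
  match c with
  | A7_1 => m1Y / m1S - ylo
  | A7_2 => m1Y / m1S - (m0Y - yhi * (- dS)) / m1S
  | A7_3 => m1Y / m1S - Num.max ((m0Y - yhi * (- dS)) / m1S) ylo
  end.
End Bounds.

From HB Require Import structures.
From mathcomp Require Import all_boot all_order all_algebra.
From mathcomp Require Import all_classical all_reals all_analysis.
From mathcomp Require Import ring lra.
Set Implicit Arguments. Unset Strict Implicit. Unset Printing Implicit Defensive.
Import Order.TTheory GRing.Theory Num.Theory.
Import numFieldNormedType.Exports.
Local Open Scope classical_set_scope.
Local Open Scope ring_scope.

(* Under monotone selection one selection event is almost surely contained in
   the other, so the units selected under both treatments are those selected
   into the smaller population.  Let s, l be the selection probabilities of the
   smaller and the larger population given (X, U), ys, yl the corresponding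
   m^Y, and Yl the outcome observed on the larger population.  Then
   s * Delta^OO = E[Yl; both | X, U] - ys and
   E[Yl; both | X, U] = yl - E[Yl; larger only | X, U], so a lower support
   bound c <= Yl gives  c s - ys <= s * Delta^OO <= yl - ys - c (l - s),  an upper
   bound reverses both inequalities, and dividing by s > 0 gives the Delta
   bounds when S_0 <= S_1 and the Lambda bounds when S_1 <= S_0; min and max
   cover the unknown direction.
   These inequalities first hold between integrals over every event
   {(X, U) \in A}; they pass to the given versions almost surely because the
   set where they fail is covered by countably many null "rational cells". *)

Lemma measurable_set_le (R : realType) (d : measure_display) (T : measurableType d)
  (f g : T -> R) : measurable_fun setT f -> measurable_fun setT g ->
  measurable [set t | f t <= g t].
Proof.
move=> mf mg; rewrite -[X in measurable X]setTI.
exact: (measurable_realfun.measurable_fun_ler mf mg).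
Qed.

Lemma preimage_measurable (d1 d2 : measure_display) (T1 : measurableType d1)
  (T2 : measurableType d2) (f : T1 -> T2) (A : set T2) :
  measurable_fun setT f -> measurable A -> measurable (f @^-1` A).
Proof. by move=> mf mA; rewrite -[X in measurable X]setTI; apply: mf. Qed.

Section RealIntegrable.
Context (R : realType) (d : measure_display) (T : measurableType d)
  (mu : {measure set T -> \bar R}) (D : set T) (mD : measurable D).

Lemma integrableRB (f g : T -> R) : mu.-integrable D (EFin \o f) ->
  mu.-integrable D (EFin \o g) -> mu.-integrable D (EFin \o (fun x => f x - g x)).
Proof. by move=> If Ig; apply: eq_integrable (integrableB mD If Ig). Qed.

Lemma integrableRZl (k : R) (f : T -> R) : mu.-integrable D (EFin \o f) ->
  mu.-integrable D (EFin \o (fun x => k * f x)).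
Proof. by move=> If; apply: eq_integrable (integrableZl mD k If). Qed.

Lemma RintegralN (f : T -> R) : mu.-integrable D (EFin \o f) ->
  \int[mu]_(x in D) - f x = - \int[mu]_(x in D) f x.
Proof.
by move=> If; rewrite -mulN1r -RintegralZl //; apply: eq_Rintegral => x _; rewrite mulN1r.
Qed.

End RealIntegrable.

Section AlmostSure.
Context (R : realType) (d : measure_display) (Omega : measurableType d)
  (P : probability Omega R).

Lemma Rintegral_ae_set (A B : set Omega) (f : Omega -> R) :
  measurable A -> measurable B -> {ae P, forall w, A w <-> B w} ->
  P.-integrable setT (EFin \o f) ->
  \int[P]_(w in A) f w = \int[P]_(w in B) f w.
Proof.
move=> mA mB [N [mN PN sN]] If.
rewrite /Rintegral (negligible_integral mN mA _ PN); last exact: integrableS If.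
rewrite (negligible_integral mN mB _ PN); last exact: integrableS If.
congr (fine (integral _ _ _)); apply/seteqP; split=> w [Dw Nw]; split=> //;
  have AB : A w <-> B w by apply: contrapT => /sN.
- exact: AB.1.
- exact: AB.2.
Qed.

Lemma measure_ae_set (A B : set Omega) : measurable A -> measurable B ->
  {ae P, forall w, A w <-> B w} -> P A = P B.
Proof.
move=> mA mB AB.
have I1 : P.-integrable setT (EFin \o (fun=> 1 : R)).
  exact: finite_measure_integrable_cst.
have := Rintegral_ae_set mA mB AB I1; rewrite !Rintegral_cst // !mul1r.
by move=> e; rewrite -[LHS]fineK ?e ?fineK //; apply: fin_num_measure.
Qed.

Lemma le_Rintegral_ae (D : set Omega) (f g : Omega -> R) : measurable D ->
  P.-integrable setT (EFin \o f) -> P.-integrable setT (EFin \o g) ->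
  {ae P, forall w, f w <= g w} ->
  \int[P]_(w in D) f w <= \int[P]_(w in D) g w.
Proof.
move=> mD If Ig [N [mN PN sN]].
have mDN : measurable (D `\` N) by exact: measurableD.
have DN : {ae P, forall w, D w <-> (D `\` N) w}.
  by exists N; split=> // w /= DNw; apply: contrapT => Nw; apply: DNw; split=> [|[]].
rewrite !(Rintegral_ae_set mD mDN DN) //.
apply: le_Rintegral => //; try exact: integrableS If; try exact: integrableS Ig.
by move=> w [_ Nw]; apply: contrapT => fg; apply/Nw/sN.
Qed.

Lemma ae_rv_support (Y : Omega -> R) : measurable_fun setT Y ->
  {ae P, forall w, rv_support P Y (Y w)}.
Proof.
move=> mY.
have mball x e : measurable (Y @^-1` ball (x : R) e).
  exact: preimage_measurable mY (measurable_realfun.open_measurable (ball_open _ _)).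
(* the null balls with rational centre and radius cover the complement *)
pose F k : set Omega := if unpickle k is Some (c, r) then
  (if P (Y @^-1` ball (ratr c : R) (ratr r)) == 0%E
   then Y @^-1` ball (ratr c : R) (ratr r) else set0) else set0.
apply: (negligibleS _ (negligible_bigcup (F := F) _)) => [w /= Nw|k].
  have [e [e0 Pe]] : exists e : R, 0 < e /\ P (Y @^-1` ball (Y w) e) = 0%E.
    apply: contrapT => H; apply: Nw => e e0; rewrite lt0e measure_ge0 andbT.
    by apply/negP => /eqP Pe; apply: H; exists e.
  have [c [r [/= wB sB]]] := @open_subball_rat R (ball (Y w) e) (Y w)
    (ball_open _ _) (mem_set (ballxx _ e0)).
  exists (pickle (c, r)); first by [].
  rewrite /F pickleK.
  have -> : P (Y @^-1` ball (ratr c : R) (ratr r)) = 0%E.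
    apply/eqP; rewrite eq_le measure_ge0 andbT -Pe.
    by apply: le_measure; rewrite ?inE // => z /sB.
  by rewrite eqxx; move: wB; rewrite inE.
rewrite /F; case: (unpickle k) => [[c r]|]; last exact: negligible_set0.
case: ifPn => [/eqP P0|_]; last exact: negligible_set0.
by exists (Y @^-1` ball (ratr c : R) (ratr r)); split.
Qed.

Lemma ae_rv_support_inf_le (Y : Omega -> R) : measurable_fun setT Y ->
  (-oo < ereal_inf (EFin @` rv_support P Y))%E ->
  {ae P, forall w, fine (ereal_inf (EFin @` rv_support P Y)) <= Y w}.
Proof.
move=> mY inf_gtNy; apply: filterS (ae_rv_support mY) => w Yw.
have le : (ereal_inf (EFin @` rv_support P Y) <= (Y w)%:E)%E.
  by apply: ereal_inf_lbound; exists (Y w).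
have inf_lty : (ereal_inf (EFin @` rv_support P Y) < +oo)%E.
  exact: le_lt_trans le (ltry _).
by rewrite -lee_fin fineK // fin_numE gt_eqF // lt_eqF.
Qed.

Lemma ae_le_rv_support_sup (Y : Omega -> R) : measurable_fun setT Y ->
  (ereal_sup (EFin @` rv_support P Y) < +oo)%E ->
  {ae P, forall w, Y w <= fine (ereal_sup (EFin @` rv_support P Y))}.
Proof.
move=> mY sup_lty; apply: filterS (ae_rv_support mY) => w Yw.
have le : ((Y w)%:E <= ereal_sup (EFin @` rv_support P Y))%E.
  by apply: ereal_sup_ubound; exists (Y w).
have sup_gtNy : (-oo < ereal_sup (EFin @` rv_support P Y))%E.
  exact: lt_le_trans (ltNyr _) le.
by rewrite -lee_fin fineK // fin_numE gt_eqF // lt_eqF.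
Qed.

Lemma support_case_ae_bounds (c : supp_case) (Y : Omega -> R) :
  measurable_fun setT Y -> support_case c (rv_support P Y) ->
  (c <> A7_2 -> {ae P, forall w, fine (ereal_inf (EFin @` rv_support P Y)) <= Y w}) /\
  (c <> A7_1 -> {ae P, forall w, Y w <= fine (ereal_sup (EFin @` rv_support P Y))}).
Proof.
move=> mY; case: c => /= [[lo [hi _]]|[lo [hi _]]|[lo [hi _]]]; split=> // _.
- exact: ae_rv_support_inf_le.
- exact: ae_le_rv_support_sup.
- by apply: ae_rv_support_inf_le => //; move: lo; rewrite fin_numE ltNye => /andP[].
- by apply: ae_le_rv_support_sup => //; move: hi; rewrite fin_numE ltey => /andP[].
Qed.

End AlmostSure.

Lemma rat_cell_cover (R : realType) (a D k : R) : 0 <= a -> k < a * D ->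
  exists (q : rat) (m : nat), ratr q <= D /\ k + m.+1%:R^-1 <= ratr q * a.
Proof.
move=> a0 kD; set h := (a * D - k) / (a + 1).
have h0 : 0 < h by rewrite divr_gt0 ?subr_gt0 // ltr_wpDl.
have [q /andP[/= Dq qD]] : exists q : rat, ratr q \in `]D - h, D[.
  by apply: rat_in_itvoo; rewrite gtrBl.
(* [h (a + 1) = a D - k] is exactly what makes [q > D - h] imply [q a >= k + h] *)
have qa : k + h <= ratr q * a.
  have condprob_preIE : h * (a + 1) = a * D - k by rewrite /h mulfVK // gt_eqF // ltr_wpDl.
  have : 0 <= (ratr q - (D - h)) * a by rewrite mulr_ge0 // subr_ge0 ltW.
  nra.
near \oo => m; exists q, m; split; first exact: ltW.
apply: le_trans qa; rewrite lerD2l ltW //; near: m.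
exact: (near_infty_natSinv_lt (PosNum h0)).
Unshelve. all: by end_near.
Qed.

Section CondexpComparison.
Context (R : realType) (d : measure_display) (Omega : measurableType d)
  (P : probability Omega R) (dT : measure_display) (T : measurableType dT)
  (G : Omega -> T) (mG : measurable_fun setT G) (E : set Omega) (mE : measurable E)
  (a : T -> R) (ma : measurable_fun setT a)
  (Ia : P.-integrable setT (EFin \o (a \o G)))
  (ha : forall A, measurable A ->
     P (G @^-1` A `&` E) = (\int[P]_(w in G @^-1` A) (a (G w))%:E)%E).

Let mpre A : measurable A -> measurable (G @^-1` A) := preimage_measurable mG.

Lemma condexp_cell_null (A : set T) (D k : T -> R) (q e : R) :
  measurable A -> 0 < e ->
  P.-integrable E (EFin \o (D \o G)) -> P.-integrable setT (EFin \o (k \o G)) ->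
  \int[P]_(w in G @^-1` A `&` E) D (G w) <= \int[P]_(w in G @^-1` A) k (G w) ->
  (forall t, A t -> q <= D t /\ k t + e <= q * a t) ->
  P (G @^-1` A) = 0%E.
Proof.
move=> mA e0 ID Ik DAk HA; set I := G @^-1` A.
have mI : measurable I := mpre mA.
have mIE : measurable (I `&` E) by exact: measurableI.
have IaI : P.-integrable I (EFin \o (a \o G)) by exact: integrableS Ia.
have IkI : P.-integrable I (EFin \o (k \o G)) by exact: integrableS Ik.
have PIE : fine (P (I `&` E)) = \int[P]_(w in I) a (G w) by rewrite ha.
(* q P(I & E) <= int_(I & E) D <= int_I k <= q P(I & E) - e P(I) *)
have lo : q * fine (P (I `&` E)) <= \int[P]_(w in I `&` E) D (G w).
  rewrite -Rintegral_cst //; apply: le_Rintegral => //.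
  - exact: finite_measure_integrable_cst.
  - exact: integrableS ID.
  - by move=> w [/HA[]].
have hi : \int[P]_(w in I) k (G w) <= q * fine (P (I `&` E)) - e * fine (P I).
  rewrite PIE -RintegralZl // -Rintegral_cst // -RintegralB //.
  - apply: le_Rintegral => //; last by move=> w /HA[_]; rewrite lerBrDr addrC.
    apply: integrableRB => //; first exact: integrableRZl.
    exact: finite_measure_integrable_cst.
  - exact: integrableRZl.
  - exact: finite_measure_integrable_cst.
have : e * fine (P I) <= 0 by lra.
rewrite pmulr_rle0 // => PI0; apply/eqP; rewrite eq_le measure_ge0 andbT.
by rewrite -(fineK (fin_num_measure P _ mI)) lee_fin.
Qed.

Lemma condexp_prob_ge0 : {ae P, forall w, 0 <= a (G w)}.
Proof.
have mneg m : measurable [set t | a t <= - m.+1%:R^-1].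
  exact: measurable_set_le ma (measurable_cst _).
apply: (negligibleS _ (negligible_bigcup
  (F := fun m => G @^-1` [set t | a t <= - m.+1%:R^-1]) _)) => [w /= aw|m].
  have [m _ am] : \forall m \near \oo, m.+1%:R^-1 < - a (G w).
    by apply: (near_infty_natSinv_lt (PosNum _)); rewrite oppr_gt0 ltNge; apply/negP.
  by exists m => //=; rewrite lerNr ltW //; apply: am => /=.
have mGm := mpre (mneg m).
exists (G @^-1` [set t | a t <= - m.+1%:R^-1]); split=> //.
apply: (@condexp_cell_null _ (fun=> 0) (fun=> 0) (-1) m.+1%:R^-1) => //.
- exact: finite_measure_integrable_cst.
- exact: finite_measure_integrable_cst.
- by rewrite !Rintegral_cst ?mul0r //; exact: measurableI.
- by move=> t /= at_neg; rewrite lerN10 add0r mulN1r lerNr.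
Qed.

Lemma ae_condexp_le (D k : T -> R) :
  measurable_fun setT D -> measurable_fun setT k ->
  P.-integrable E (EFin \o (D \o G)) -> P.-integrable setT (EFin \o (k \o G)) ->
  (forall A, measurable A ->
     \int[P]_(w in G @^-1` A `&` E) D (G w) <= \int[P]_(w in G @^-1` A) k (G w)) ->
  {ae P, forall w, a (G w) * D (G w) <= k (G w)}.
Proof.
move=> mD mk ID Ik DAk.
pose cell q e := [set t | 0 <= a t] `&` [set t | q <= D t] `&`
                 [set t | k t + e <= q * a t].
have mcell q e : measurable (cell q e).
  apply: measurableI; [apply: measurableI|]; apply: measurable_set_le => //.
  - exact: measurable_realfun.measurable_funD mk (measurable_cst _).
  - exact: measurable_realfun.measurable_funM (measurable_cst _) ma.
pose C n := if (unpickle n : option (rat * nat)) is Some (q, m)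
            then G @^-1` cell (ratr q) m.+1%:R^-1 else set0.
have Cnull n : P.-negligible (C n).
  rewrite /C; case: unpickle => [[q m]|]; last exact: negligible_set0.
  exists (G @^-1` cell (ratr q) m.+1%:R^-1); split=> //; first exact: mpre.
  by apply: (condexp_cell_null (q := ratr q) (e := m.+1%:R^-1) (mcell _ _) _ ID Ik
    (DAk _ (mcell _ _))) => // t [[_ qD] kq]; split.
have cover : {ae P, forall w, 0 <= a (G w) -> a (G w) * D (G w) <= k (G w)}.
  apply: negligibleS (negligible_bigcup Cnull) => w /= nw.
  have a0 : 0 <= a (G w) by apply: contrapT => H; apply: nw => /H.
  have kaD : k (G w) < a (G w) * D (G w) by rewrite ltNge; apply/negP => H; apply: nw.
  have [q [m [qD kq]]] := rat_cell_cover a0 kaD.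
  exists (pickle (q, m)); first by [].
  by rewrite /C pickleK.
by apply: filterS2 condexp_prob_ge0 cover => w a0; apply.
Qed.

Lemma ae_condexp_ge (D k : T -> R) :
  measurable_fun setT D -> measurable_fun setT k ->
  P.-integrable E (EFin \o (D \o G)) -> P.-integrable setT (EFin \o (k \o G)) ->
  (forall A, measurable A ->
     \int[P]_(w in G @^-1` A) k (G w) <= \int[P]_(w in G @^-1` A `&` E) D (G w)) ->
  {ae P, forall w, k (G w) <= a (G w) * D (G w)}.
Proof.
move=> mD mk ID Ik kAD.
suff : {ae P, forall w, a (G w) * - D (G w) <= - k (G w)}.
  by apply: filterS => w; rewrite mulrN lerN2.
apply: (@ae_condexp_le (fun t => - D t) (fun t => - k t)).
- exact: measurable_realfun.measurable_funN.
- exact: measurable_realfun.measurable_funN.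
- exact: integrableN ID.
- exact: integrableN Ik.
move=> A mA; have mGA := mpre mA.
have IkA : P.-integrable (G @^-1` A) (EFin \o (k \o G)) by exact: integrableS Ik.
have IDA : P.-integrable (G @^-1` A `&` E) (EFin \o (D \o G)).
  by apply: integrableS ID => //; exact: measurableI.
by rewrite !RintegralN ?lerN2 ?kAD //; exact: measurableI.
Qed.

End CondexpComparison.

Section IndicatorCondexp.
Context (R : realType) (d : measure_display) (Omega : measurableType d)
  (P : probability Omega R) (dT : measure_display) (T : measurableType dT)
  (G : Omega -> T) (mG : measurable_fun setT G)
  (p : Omega -> bool) (mp : measurable [set w | p w]).

Let mpre A : measurable A -> measurable (G @^-1` A) := preimage_measurable mG.

Lemma condexp_indicatorE (m : T -> R) : is_condexp P G (fun w => (p w)%:R) m ->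
  forall A, measurable A ->
  P (G @^-1` A `&` [set w | p w]) = (\int[P]_(w in G @^-1` A) (m (G w))%:E)%E.
Proof.
move=> [_ [_ hm]] A mA; rewrite -hm // setIC -integral_indic //; last exact: mpre.
apply: eq_integral => w _; rewrite indicE.
by case: (boolP (p w)) => pw; [rewrite mem_set|rewrite memNset //; exact/negP].
Qed.

Lemma condexp_indicator_mulE (Y : Omega -> R) (m : T -> R) :
  is_condexp P G (fun w => (p w)%:R * Y w) m ->
  forall A, measurable A ->
  \int[P]_(w in G @^-1` A `&` [set w | p w]) Y w = \int[P]_(w in G @^-1` A) m (G w).
Proof.
move=> [_ [_ hm]] A mA; rewrite Rintegral_mkcondr /Rintegral -hm //.
congr fine; apply: eq_integral => w _; rewrite patchE.
by case: (boolP (p w)) => pw;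
  [rewrite mem_set // mul1r|rewrite memNset ?mul0r //; exact/negP].
Qed.

End IndicatorCondexp.

Section SelectionBounds.
Context (R : realType) (d : measure_display) (Omega : measurableType d)
  (P : probability Omega R) (dT : measure_display) (T : measurableType dT)
  (G : Omega -> T) (mG : measurable_fun setT G)
  (S L : set Omega) (mS : measurable S) (mL : measurable L)
  (SL : {ae P, forall w, S w -> L w})
  (Ys Yl : Omega -> R)
  (IYs : P.-integrable setT (EFin \o Ys)) (IYl : P.-integrable setT (EFin \o Yl))
  (s l ys yl D : T -> R)
  (ms : measurable_fun setT s) (ml : measurable_fun setT l)
  (mys : measurable_fun setT ys) (myl : measurable_fun setT yl)
  (mD : measurable_fun setT D)
  (Is : P.-integrable setT (EFin \o (s \o G)))
  (Il : P.-integrable setT (EFin \o (l \o G)))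
  (Iys : P.-integrable setT (EFin \o (ys \o G)))
  (Iyl : P.-integrable setT (EFin \o (yl \o G)))
  (ID : P.-integrable (S `&` L) (EFin \o (D \o G)))
  (hs : forall A, measurable A ->
     P (G @^-1` A `&` S) = (\int[P]_(w in G @^-1` A) (s (G w))%:E)%E)
  (hl : forall A, measurable A ->
     P (G @^-1` A `&` L) = (\int[P]_(w in G @^-1` A) (l (G w))%:E)%E)
  (hys : forall A, measurable A ->
     \int[P]_(w in G @^-1` A `&` S) Ys w = \int[P]_(w in G @^-1` A) ys (G w))
  (hyl : forall A, measurable A ->
     \int[P]_(w in G @^-1` A `&` L) Yl w = \int[P]_(w in G @^-1` A) yl (G w))
  (hD : forall A, measurable A ->
     \int[P]_(w in G @^-1` A `&` (S `&` L)) D (G w) =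
     \int[P]_(w in G @^-1` A `&` (S `&` L)) Yl w -
     \int[P]_(w in G @^-1` A `&` (S `&` L)) Ys w).

Let E := S `&` L.
Let mE : measurable E := measurableI _ _ mS mL.
Let mpre A : measurable A -> measurable (G @^-1` A) := preimage_measurable mG.
Let mAE A : measurable A -> measurable (G @^-1` A `&` E).
Proof. by move=> mA; apply: measurableI => //; exact: mpre. Qed.
Let mALS A : measurable A -> measurable (G @^-1` A `&` (L `\` S)).
Proof. by move=> mA; apply: measurableI; [exact: mpre|exact: measurableD]. Qed.
Let integrable_pre f A : measurable A -> P.-integrable setT (EFin \o (f \o G)) ->
  P.-integrable (G @^-1` A) (EFin \o (f \o G)).
Proof. by move=> mA; apply: integrableS => //; exact: mpre. Qed.

Let preIE_ae_preIS A : {ae P, forall w, (G @^-1` A `&` E) w <-> (G @^-1` A `&` S) w}.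
Proof.
apply: filterS SL => w SLw.
by split=> [[Aw [Sw _]]|[Aw Sw]]; split=> //; split=> //; exact: SLw.
Qed.

Let preIL_split A : G @^-1` A `&` L = (G @^-1` A `&` E) `|` (G @^-1` A `&` (L `\` S)).
Proof.
apply/seteqP; split=> [w [Aw Lw]|w [[Aw [_ Lw]]|[Aw [Lw _]]]] //.
by have [Sw|NSw] := pselect (S w); [left|right].
Qed.

Let preIL_disj A : [disjoint G @^-1` A `&` E & G @^-1` A `&` (L `\` S)].
Proof. by apply/disj_setPS => w [[_ [Sw _]] [_ [_ NSw]]]. Qed.

Let condprob_preIE A : measurable A ->
  P (G @^-1` A `&` E) = (\int[P]_(w in G @^-1` A) (s (G w))%:E)%E.
Proof.
move=> mA; rewrite -hs // (measure_ae_set (mAE mA) _ (preIE_ae_preIS A)) //.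
by apply: measurableI => //; exact: mpre.
Qed.

Let int_s A : measurable A ->
  \int[P]_(w in G @^-1` A) s (G w) = fine (P (G @^-1` A `&` E)).
Proof. by move=> mA; rewrite condprob_preIE. Qed.

Let int_l A : measurable A -> \int[P]_(w in G @^-1` A) l (G w) =
  fine (P (G @^-1` A `&` E)) + fine (P (G @^-1` A `&` (L `\` S))).
Proof.
move=> mA; rewrite /Rintegral -hl // preIL_split measureU; first last.
- exact/eqP/preIL_disj.
- exact: mALS.
- exact: mAE.
by rewrite fineD // fin_num_measure //; [exact: mAE|exact: mALS].
Qed.

Let int_yl A : measurable A -> \int[P]_(w in G @^-1` A) yl (G w) =
  \int[P]_(w in G @^-1` A `&` E) Yl w + \int[P]_(w in G @^-1` A `&` (L `\` S)) Yl w.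
Proof.
move=> mA; have mU : measurable ((G @^-1` A `&` E) `|` (G @^-1` A `&` (L `\` S))).
  by apply: measurableU; [exact: mAE|exact: mALS].
by rewrite -hyl // preIL_split Rintegral_setU //;
  [exact: mAE|exact: mALS|exact: integrableS IYl].
Qed.

Let int_D A : measurable A -> \int[P]_(w in G @^-1` A `&` E) D (G w) =
  \int[P]_(w in G @^-1` A `&` E) Yl w - \int[P]_(w in G @^-1` A) ys (G w).
Proof.
move=> mA; rewrite hD // -hys //; congr (_ - _).
apply: Rintegral_ae_set => //; first exact: mAE.
by apply: measurableI => //; exact: mpre.
Qed.

Let k_in (c : R) (t : T) := c * s t - ys t.
Let k_out (c : R) (t : T) := yl t - ys t - c * (l t - s t).

Let mk_in c : measurable_fun setT (k_in c).
Proof.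
apply: measurable_realfun.measurable_funB => //.
exact: measurable_realfun.measurable_funM (measurable_cst _) ms.
Qed.

Let mk_out c : measurable_fun setT (k_out c).
Proof.
apply: measurable_realfun.measurable_funB.
  exact: measurable_realfun.measurable_funB.
apply: measurable_realfun.measurable_funM; first exact: measurable_cst.
exact: measurable_realfun.measurable_funB.
Qed.

Let Ik_in c : P.-integrable setT (EFin \o (k_in c \o G)).
Proof. by apply: integrableRB => //; exact: integrableRZl. Qed.

Let Ik_out c : P.-integrable setT (EFin \o (k_out c \o G)).
Proof.
apply: integrableRB => //; first exact: integrableRB.
by apply: integrableRZl => //; exact: integrableRB.
Qed.

Let int_k_in c A : measurable A -> \int[P]_(w in G @^-1` A) k_in c (G w) =
  c * fine (P (G @^-1` A `&` E)) - \int[P]_(w in G @^-1` A) ys (G w).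
Proof.
move=> mA; have mGA := mpre mA.
rewrite RintegralB ?RintegralZl ?int_s //; try exact: integrable_pre.
by apply: integrableRZl => //; exact: integrable_pre.
Qed.

Let int_k_out c A : measurable A -> \int[P]_(w in G @^-1` A) k_out c (G w) =
  \int[P]_(w in G @^-1` A `&` E) Yl w + \int[P]_(w in G @^-1` A `&` (L `\` S)) Yl w
  - \int[P]_(w in G @^-1` A) ys (G w) - c * fine (P (G @^-1` A `&` (L `\` S))).
Proof.
move=> mA; have mGA := mpre mA.
have IlsA : P.-integrable (G @^-1` A) (EFin \o (fun w => l (G w) - s (G w))).
  by apply: integrableRB => //; exact: integrable_pre.
rewrite RintegralB //; last by apply: integrableRZl.
  rewrite RintegralZl // RintegralB ?RintegralB ?int_yl ?int_l ?int_s //;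
    try exact: integrable_pre.
  lra.
by apply: integrableRB => //; exact: integrable_pre.
Qed.

Let le_int_Yl c B : measurable B -> {ae P, forall w, c <= Yl w} ->
  c * fine (P B) <= \int[P]_(w in B) Yl w.
Proof.
move=> mB cY; rewrite -Rintegral_cst //; apply: le_Rintegral_ae => //.
exact: finite_measure_integrable_cst.
Qed.

Let int_Yl_le c B : measurable B -> {ae P, forall w, Yl w <= c} ->
  \int[P]_(w in B) Yl w <= c * fine (P B).
Proof.
move=> mB Yc; rewrite -Rintegral_cst //; apply: le_Rintegral_ae => //.
exact: finite_measure_integrable_cst.
Qed.

Lemma selection_prob_ge0 : {ae P, forall w, 0 <= s (G w)}.
Proof. exact: (condexp_prob_ge0 mG mE ms Is condprob_preIE). Qed.

Lemma selection_bounds_ge (c : R) : {ae P, forall w, c <= Yl w} ->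
  {ae P, forall w, c * s (G w) - ys (G w) <= s (G w) * D (G w)
                   <= yl (G w) - ys (G w) - c * (l (G w) - s (G w))}.
Proof.
move=> cY; apply: filterS2
  (ae_condexp_ge mG mE ms Is condprob_preIE mD (mk_in c) ID (Ik_in c) _)
  (ae_condexp_le mG mE ms Is condprob_preIE mD (mk_out c) ID (Ik_out c) _).
- by move=> w lo hi; apply/andP.
- move=> A mA; rewrite int_k_in // int_D //.
  by have := le_int_Yl (mAE mA) cY; lra.
- move=> A mA; rewrite int_k_out // int_D //.
  by have := le_int_Yl (mALS mA) cY; lra.
Qed.

Lemma selection_bounds_le (c : R) : {ae P, forall w, Yl w <= c} ->
  {ae P, forall w, yl (G w) - ys (G w) - c * (l (G w) - s (G w))
                   <= s (G w) * D (G w) <= c * s (G w) - ys (G w)}.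
Proof.
move=> Yc; apply: filterS2
  (ae_condexp_ge mG mE ms Is condprob_preIE mD (mk_out c) ID (Ik_out c) _)
  (ae_condexp_le mG mE ms Is condprob_preIE mD (mk_in c) ID (Ik_in c) _).
- by move=> w lo hi; apply/andP.
- move=> A mA; rewrite int_k_out // int_D //.
  by have := int_Yl_le (mALS mA) Yc; lra.
- move=> A mA; rewrite int_k_in // int_D //.
  by have := int_Yl_le (mAE mA) Yc; lra.
Qed.

Lemma selection_bounds (Plo Phi : Prop) (clo chi : R) :
  (Plo -> {ae P, forall w, clo <= Yl w}) -> (Phi -> {ae P, forall w, Yl w <= chi}) ->
  {ae P, forall w, [/\ 0 <= s (G w),
    Plo -> clo * s (G w) - ys (G w) <= s (G w) * D (G w)
           <= yl (G w) - ys (G w) - clo * (l (G w) - s (G w)) &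
    Phi -> yl (G w) - ys (G w) - chi * (l (G w) - s (G w))
           <= s (G w) * D (G w) <= chi * s (G w) - ys (G w)]}.
Proof.
move=> lo hi.
have ge : {ae P, forall w, Plo -> clo * s (G w) - ys (G w) <= s (G w) * D (G w)
                             <= yl (G w) - ys (G w) - clo * (l (G w) - s (G w))}.
  have [/lo cY|nlo] := pselect Plo; last by apply: aeW => w /nlo.
  by apply: filterS (selection_bounds_ge cY) => w ? _.
have le : {ae P, forall w, Phi -> yl (G w) - ys (G w) - chi * (l (G w) - s (G w))
                             <= s (G w) * D (G w) <= chi * s (G w) - ys (G w)}.
  have [/hi Yc|nhi] := pselect Phi; last by apply: aeW => w /nhi.
  by apply: filterS (selection_bounds_le Yc) => w ? _.
by apply: filterS3 selection_prob_ge0 ge le => w.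
Qed.

End SelectionBounds.

Lemma Delta_between (R : realType) (c : supp_case) (ylo yhi y0 y1 s0 s1 D : R) :
  0 < s0 ->
  (c <> A7_2 -> ylo * s0 - y0 <= s0 * D <= y1 - y0 - ylo * (s1 - s0)) ->
  (c <> A7_1 -> y1 - y0 - yhi * (s1 - s0) <= s0 * D <= yhi * s0 - y0) ->
  Delta_lo ylo yhi y0 y1 s0 s1 c <= D <= Delta_hi ylo yhi y0 y1 s0 s1 c.
Proof.
move=> s0_gt0 hlo hhi; have s0_neq0 : s0 != 0 by rewrite gt_eqF.
have div_le x : (x / s0 <= D) = (x <= s0 * D) by rewrite ler_pdivrMr // mulrC.
have le_div x : (D <= x / s0) = (s0 * D <= x) by rewrite ler_pdivlMr // mulrC.
have lo_case : c <> A7_2 -> Delta_lo ylo yhi y0 y1 s0 s1 A7_1 <= D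
                             <= Delta_hi ylo yhi y0 y1 s0 s1 A7_1.
  move=> /hlo; rewrite /Delta_lo /Delta_hi.
  have -> : ylo - y0 / s0 = (ylo * s0 - y0) / s0 by field.
  have -> : (y1 - ylo * (s1 - s0)) / s0 - y0 / s0 =
            (y1 - y0 - ylo * (s1 - s0)) / s0 by field.
  by rewrite div_le le_div.
have hi_case : c <> A7_1 -> Delta_lo ylo yhi y0 y1 s0 s1 A7_2 <= D
                             <= Delta_hi ylo yhi y0 y1 s0 s1 A7_2.
  move=> /hhi; rewrite /Delta_lo /Delta_hi.
  have -> : (y1 - yhi * (s1 - s0)) / s0 - y0 / s0 =
            (y1 - y0 - yhi * (s1 - s0)) / s0 by field.
  have -> : yhi - y0 / s0 = (yhi * s0 - y0) / s0 by field.
  by rewrite div_le le_div.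
case: c hlo hhi lo_case hi_case => hlo hhi lo_case hi_case; first exact: lo_case.
  exact: hi_case.
have /andP[l1 u1] := lo_case ltac:(by []).
have /andP[l2 u2] := hi_case ltac:(by []).
move: l1 u1 l2 u2; rewrite /Delta_lo /Delta_hi => l1 u1 l2 u2.
apply/andP; split; first by rewrite lerBlDr ge_max -!lerBlDr l1 l2.
by rewrite lerBrDr le_min -!lerBrDr u1 u2.
Qed.

Lemma Lambda_loE (R : realType) (c : supp_case) (ylo yhi y0 y1 s0 s1 : R) :
  Lambda_lo ylo yhi y0 y1 s0 s1 c = - Delta_hi ylo yhi y1 y0 s1 s0 c.
Proof. by case: c; rewrite /Lambda_lo /Delta_hi !opprB. Qed.

Lemma Lambda_hiE (R : realType) (c : supp_case) (ylo yhi y0 y1 s0 s1 : R) :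
  Lambda_hi ylo yhi y0 y1 s0 s1 c = - Delta_lo ylo yhi y1 y0 s1 s0 c.
Proof. by case: c; rewrite /Lambda_hi /Delta_lo !opprB. Qed.

Lemma Lambda_between (R : realType) (c : supp_case) (ylo yhi y0 y1 s0 s1 D : R) :
  0 < s1 ->
  (c <> A7_2 -> ylo * s1 - y1 <= s1 * - D <= y0 - y1 - ylo * (s0 - s1)) ->
  (c <> A7_1 -> y0 - y1 - yhi * (s0 - s1) <= s1 * - D <= yhi * s1 - y1) ->
  Lambda_lo ylo yhi y0 y1 s0 s1 c <= D <= Lambda_hi ylo yhi y0 y1 s0 s1 c.
Proof.
move=> s1_gt0 hlo hhi; have /andP[l u] := Delta_between s1_gt0 hlo hhi.
by rewrite Lambda_loE Lambda_hiE lerNl u lerNr l.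
Qed.

Section MonotoneSelection.
Context (R : realType) (d : measure_display) (Omega : measurableType d)
  (P : probability Omega R) (dT : measure_display) (T : measurableType dT)
  (G : Omega -> T) (mG : measurable_fun setT G)
  (sel : bool -> Omega -> bool) (msel : forall b, measurable [set w | sel b w])
  (Y : bool -> Omega -> R) (IY : forall b, P.-integrable setT (EFin \o Y b))
  (mS mY : bool -> T -> R) (DOO : T -> R)
  (hmS : forall b, is_condexp P G (fun w => (sel b w)%:R) (mS b))
  (hmY : forall b, is_condexp P G (fun w => (sel b w)%:R * Y b w) (mY b))
  (hDOO : is_condexp_on P G [set w | sel false w /\ sel true w]
            (fun w => Y true w - Y false w) DOO).

Let Both := [set w | sel false w /\ sel true w].
Let mBoth : measurable Both := measurableI _ _ (msel false) (msel true).
Let mpreBoth A : measurable A -> measurable (G @^-1` A `&` Both).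
Proof. by move=> mA; apply: measurableI => //; exact: preimage_measurable mG mA. Qed.

(* [sel b] is the smaller selection event; seen from it the outcome difference
   of the always-selected units is [Y (~~ b) - Y b], hence the sign flip *)
Let sgnDOO (b : bool) (t : T) := if b then - DOO t else DOO t.

Let selIsel b : [set w | sel b w] `&` [set w | sel (~~ b) w] = Both.
Proof. by case: b => //; rewrite setIC. Qed.

Let m_sgnDOO b : measurable_fun setT (sgnDOO b).
Proof. by case: b; [apply: measurable_realfun.measurable_funN|]; exact: hDOO.1. Qed.

Let I_sgnDOO b : P.-integrable ([set w | sel b w] `&` [set w | sel (~~ b) w])
  (EFin \o (sgnDOO b \o G)).
Proof. by rewrite selIsel; case: b; [exact: (integrableN hDOO.2.1)|exact: hDOO.2.1]. Qed.

Let int_DOO A : measurable A ->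
  \int[P]_(w in G @^-1` A `&` Both) DOO (G w) =
  \int[P]_(w in G @^-1` A `&` Both) Y true w - \int[P]_(w in G @^-1` A `&` Both) Y false w.
Proof.
move=> mA; have mAB := mpreBoth mA.
by rewrite -RintegralB ?(integrableS _ _ _ (IY _)) // /Rintegral hDOO.2.2.
Qed.

Let int_sgnDOO b A : measurable A ->
  \int[P]_(w in G @^-1` A `&` ([set w | sel b w] `&` [set w | sel (~~ b) w])) sgnDOO b (G w)
  = \int[P]_(w in G @^-1` A `&` ([set w | sel b w] `&` [set w | sel (~~ b) w])) Y (~~ b) w
  - \int[P]_(w in G @^-1` A `&` ([set w | sel b w] `&` [set w | sel (~~ b) w])) Y b w.
Proof.
move=> mA; have mAB := mpreBoth mA; rewrite selIsel; case: b; last exact: int_DOO.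
by rewrite RintegralN ?int_DOO ?opprB //; exact: integrableS hDOO.2.1.
Qed.

Lemma monotone_selection_bounds (b : bool) (c : supp_case) (ylo yhi : R) :
  {ae P, forall w, sel b w -> sel (~~ b) w} ->
  (c <> A7_2 -> {ae P, forall w, ylo <= Y (~~ b) w}) ->
  (c <> A7_1 -> {ae P, forall w, Y (~~ b) w <= yhi}) ->
  {ae P, forall w, [/\ 0 <= mS b (G w),
    c <> A7_2 -> ylo * mS b (G w) - mY b (G w)
                 <= mS b (G w) * (if b then - DOO (G w) else DOO (G w))
                 <= mY (~~ b) (G w) - mY b (G w) - ylo * (mS (~~ b) (G w) - mS b (G w)) &
    c <> A7_1 -> mY (~~ b) (G w) - mY b (G w) - yhi * (mS (~~ b) (G w) - mS b (G w))
                 <= mS b (G w) * (if b then - DOO (G w) else DOO (G w))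
                 <= yhi * mS b (G w) - mY b (G w)]}.
Proof.
move=> SL lo hi.
have [mSb [ISb _]] := hmS b; have [mSnb [ISnb _]] := hmS (~~ b).
have [mYb [IYb _]] := hmY b; have [mYnb [IYnb _]] := hmY (~~ b).
exact: (selection_bounds mG (msel b) (msel (~~ b)) SL (IY b) (IY (~~ b))
  mSb mSnb mYb mYnb (m_sgnDOO b) ISb ISnb IYb IYnb (I_sgnDOO b)
  (condexp_indicatorE mG (msel b) (hmS b))
  (condexp_indicatorE mG (msel (~~ b)) (hmS (~~ b)))
  (condexp_indicator_mulE (hmY b)) (condexp_indicator_mulE (hmY (~~ b)))
  (int_sgnDOO b) lo hi).
Qed.

End MonotoneSelection.

Theorem corollaryD1
  (R : realType) (d : measure_display) (Omega : measurableType d)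
  (P : probability Omega R)
  (dX dZ : measure_display) (TX : measurableType dX) (TZ : measurableType dZ)
  (X : Omega -> TX) (Z : Omega -> TZ) (U V Y0s Y1s : Omega -> R)
  (Pw : TX -> TZ -> R) (Q : bool -> TX -> R)
  (* measurability / ranges of the primitives *)
  (mX : measurable_fun setT X) (mZ : measurable_fun setT Z)
  (mU : measurable_fun setT U) (mV : measurable_fun setT V)
  (mY0 : measurable_fun setT Y0s) (mY1 : measurable_fun setT Y1s)
  (mPw : measurable_fun setT (fun w : TX * TZ => Pw w.1 w.2))
  (mQ : forall b, measurable_fun setT (Q b))
  (Pw01 : forall x z, 0 <= Pw x z <= 1)
  (Q01 : forall b x, 0 <= Q b x <= 1)
  (* U | X and V | X are Uniform[0,1] *)
  (Uunif : forall (t : R) (C : set TX), 0 <= t <= 1 -> measurable C ->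
     P ([set w | U w <= t] `&` (X @^-1` C)) = (t%:E * P (X @^-1` C))%E)
  (Vunif : forall (t : R) (C : set TX), 0 <= t <= 1 -> measurable C ->
     P ([set w | V w <= t] `&` (X @^-1` C)) = (t%:E * P (X @^-1` C))%E)
  (* (U,V) jointly continuously distributed (conditional on X) *)
  (UVcont : forall B : set (R * R), measurable B ->
     ((@lebesgue_measure R) \x (@lebesgue_measure R))%E B = 0%E ->
     P ((fun w => (U w, V w)) @^-1` B) = 0%E)
  (* (A1) *)
  (A1 : cond_indep P X Z (fun w => (U w, (V w, (Y0s w, Y1s w)))))
  (* (A2) P(W) | X nondegenerate *)
  (A2 : forall (h : TX -> R) (C : set TX), measurable_fun setT h ->
     measurable C -> (0 < P (X @^-1` C))%E ->
     (0 < P ((X @^-1` C) `&` [set w | Pw (X w) (Z w) != h (X w)]))%E)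
  (* (A3) *)
  (A30 : P.-integrable setT (EFin \o Y0s))
  (A31 : P.-integrable setT (EFin \o Y1s))
  (A30' : P.-integrable setT (EFin \o (fun w => Y0s w ^+ 2)))
  (A31' : P.-integrable setT (EFin \o (fun w => Y1s w ^+ 2)))
  (* (A4) 0 < P[D = 1 | X] < 1 *)
  (A4 : forall g : TX -> R,
     cond_prob_version P X [set w | U w <= Pw (X w) (Z w)] g ->
     {ae P, forall w, 0 < g (X w) < 1})
  (* (A6) common support, and (A7) support case *)
  (A6 : rv_support P Y0s = rv_support P Y1s)
  (c : supp_case) (A7 : support_case c (rv_support P Y0s))
  (* (A8'') monotone selection, unknown direction *)
  (A8 : {ae P, forall w, 0 < Q false (X w) < Q true (X w)} \/
        {ae P, forall w, 0 < Q true (X w) < Q false (X w)})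
  (* versions of the conditional expectations given (X,U) *)
  (m0Y m1Y m0S m1S DOO : TX * R -> R)
  (hm0Y : is_condexp P (fun w => (X w, U w))
            (fun w => ((V w <= Q false (X w))%R)%:R * Y0s w) m0Y)
  (hm1Y : is_condexp P (fun w => (X w, U w))
            (fun w => ((V w <= Q true (X w))%R)%:R * Y1s w) m1Y)
  (hm0S : is_condexp P (fun w => (X w, U w))
            (fun w => ((V w <= Q false (X w))%R)%:R) m0S)
  (hm1S : is_condexp P (fun w => (X w, U w))
            (fun w => ((V w <= Q true (X w))%R)%:R) m1S)
  (hDOO : is_condexp_on P (fun w => (X w, U w))
            [set w | V w <= Q false (X w) /\ V w <= Q true (X w)]
            (fun w => Y1s w - Y0s w) DOO) :
  let ylo := fine (ereal_inf (EFin @` rv_support P Y0s)) in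
  let yhi := fine (ereal_sup (EFin @` rv_support P Y0s)) in
  {ae P, forall w,
    let xu := (X w, U w) in
    m0S xu != 0 -> m1S xu != 0 ->
    Num.min (Delta_lo ylo yhi (m0Y xu) (m1Y xu) (m0S xu) (m1S xu) c)
            (Lambda_lo ylo yhi (m0Y xu) (m1Y xu) (m0S xu) (m1S xu) c)
    <= DOO xu <=
    Num.max (Delta_hi ylo yhi (m0Y xu) (m1Y xu) (m0S xu) (m1S xu) c)
            (Lambda_hi ylo yhi (m0Y xu) (m1Y xu) (m0S xu) (m1S xu) c)}.
Proof.
move=> ylo yhi.
pose G w := (X w, U w); pose sel b w := V w <= Q b (X w).
pose Y b := if b then Y1s else Y0s.
have mG : measurable_fun setT G := measurable_fun_pair mX mU.
have msel b : measurable [set w | sel b w].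
  exact: measurable_set_le mV (measurableT_comp (mQ b) mX).
have IY b : P.-integrable setT (EFin \o Y b) by case: b.
have hmS b : is_condexp P G (fun w => (sel b w)%:R) (if b then m1S else m0S) by case: b.
have hmY b : is_condexp P G (fun w => (sel b w)%:R * Y b w) (if b then m1Y else m0Y).
  by case: b.
have nested b : {ae P, forall w, 0 < Q b (X w) < Q (~~ b) (X w)} ->
    {ae P, forall w, sel b w -> sel (~~ b) w}.
  by apply: filterS => w /andP[_ lt] le; exact: le_trans le (ltW lt).
have [lo0 hi0] := support_case_ae_bounds mY0 A7.
have [lo1 hi1] : (c <> A7_2 -> {ae P, forall w, ylo <= Y1s w}) /\
                 (c <> A7_1 -> {ae P, forall w, Y1s w <= yhi}).
  by rewrite /ylo /yhi A6; apply: support_case_ae_bounds; rewrite -?A6.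
have bounds := monotone_selection_bounds mG msel IY hmS hmY hDOO.
case: A8 => [/nested/bounds/(_ lo1 hi1)|/nested/bounds/(_ lo0 hi0)] /=;
  apply: filterS => w [s_ge0 lo hi] s0_neq0 s1_neq0.
- have s0_gt0 : 0 < m0S (X w, U w) by rewrite lt0r s0_neq0.
  have /andP[l u] := Delta_between s0_gt0 lo hi.
  by rewrite ge_min le_max l u.
- have s1_gt0 : 0 < m1S (X w, U w) by rewrite lt0r s1_neq0.
  have /andP[l u] := Lambda_between s1_gt0 lo hi.
  by rewrite ge_min le_max l u !orbT.
Qed.
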